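(* Let $H_{KR}=[I_{10}\ M_{KR}]$ be the $10\times51$ binary matrix whose last 41 columns are, in order, the hexadecimal columns 1B6, 193, 1CC, 187, 1F6, F7, 16E, 140, 3C, 296, 22F, 303, 381, 365, 11D, 1A3, 274, 2F2, 254, 56, F, 41, 357, 208, 34, 329, 28D, 31D, 3D5, 129, 3D7, B7, 3EC, 2E2, 23C, AD, 34E, 155, 2E6, 371, D4 (10-bit binary, most significant bit on top). Then every vector of $\mathbb{F}_2^{10}$ equals the sum of three (distinct) columns of $H_{KR}$.
   Context: $I_{10}$ denotes the $10\times10$ identity matrix whose leftmost column is $(1,0,\dots,0)^T$. *)

From mathcomp Require Import all_boot all_order all_algebra.
Set Implicit Arguments. Unset Strict Implicit. Unset Printing Implicit Defensive.
Import GRing.Theory.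
Local Open Scope ring_scope.

Definition MKR_hex : seq nat :=
  [:: 0x1B6; 0x193; 0x1CC; 0x187; 0x1F6; 0xF7; 0x16E; 0x140; 0x3C; 0x296;
      0x22F; 0x303; 0x381; 0x365; 0x11D; 0x1A3; 0x274; 0x2F2; 0x254; 0x56;
      0xF; 0x41; 0x357; 0x208; 0x34; 0x329; 0x28D; 0x31D; 0x3D5; 0x129;
      0x3D7; 0xB7; 0x3EC; 0x2E2; 0x23C; 0xAD; 0x34E; 0x155; 0x2E6; 0x371;
      0xD4]%N.

(* Bit of a 10-bit number h at row i (row 0 = top = most significant bit). *)
Definition hex_bit (h : nat) (i : 'I_10) : bool := odd (h %/ 2 ^ (9 - i)).

Definition H_KR : 'M['F_2]_(10, 51) :=
  \matrix_(i < 10, j < 51)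
    if (j < 10)%N then (i == j :> nat)%:R
    else (hex_bit (nth 0%N MKR_hex (j - 10)) i)%:R.

From mathcomp Require Import all_boot all_order all_algebra.
From mathcomp Require Import zify.
Set Implicit Arguments.
Unset Strict Implicit.
Unset Printing Implicit Defensive.
Import GRing.Theory.

(* Vectors of F_2^10, and in particular the columns of H_KR, are encoded as
   bit lists, on which the sum of columns becomes the bitwise xor.  The claim
   is then a finite verification: for each of the 1024 bit lists of length 10,
   a search over the triples of column indices i < j < k finds one whose three
   columns add up to it. *)

Lemma natr_addb (R : nzSemiRingType) (a b : bool) :
  (2 \in [pchar R])%R -> ((a (+) b)%:R = a%:R + b%:R :> R)%R.
Proof.
move=> R2; case: a; case: b; rewrite /= ?addr0 ?add0r //.
by rewrite -[(1 + 1)%R]/(2%:R)%R (pcharf0 R2).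
Qed.

Lemma F2_natr_eq1 (x : 'F_2) : ((x == 1)%:R = x)%R.
Proof. by case: x => [[|[|n]] //= lt_n2]; apply/val_inj. Qed.

Definition addb_bits (s t : seq bool) : seq bool :=
  [seq nth false s i (+) nth false t i | i <- iota 0 (maxn (size s) (size t))].

Lemma nth_addb_bits s t i :
  nth false (addb_bits s t) i = nth false s i (+) nth false t i.
Proof.
have [lt_i | le_i] := ltnP i (maxn (size s) (size t)).
  by rewrite (nth_map 0) ?size_iota // nth_iota.
rewrite nth_default ?size_map ?size_iota //.
by move: le_i; rewrite geq_max => /andP[le_s le_t]; rewrite !nth_default.
Qed.

Fixpoint bitseqs (n : nat) : seq (seq bool) :=
  if n is n'.+1 then [seq b :: s | b <- [:: false; true], s <- bitseqs n']
  else [:: [::]].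

Lemma mem_bitseqs (s : seq bool) : s \in bitseqs (size s).
Proof.
by elim: s => // b s IHs; apply: (allpairs_f (fun b s => b :: s)) => //; case: b.
Qed.

Section BitColumns.

Variable n : nat.

Definition col_of_bits (s : seq bool) : 'cV['F_2]_n := \col_i (nth false s i)%:R%R.

Definition bits_of_col (v : 'cV['F_2]_n) : seq bool :=
  [seq v i ord0 == 1%R | i <- enum 'I_n].

Lemma size_bits_of_col v : size (bits_of_col v) = n.
Proof. by rewrite size_map size_enum_ord. Qed.

Lemma bits_of_colK : cancel bits_of_col col_of_bits.
Proof.
move=> v; apply/matrixP => i j; rewrite ord1 mxE.
by rewrite (nth_map i) ?size_enum_ord // nth_ord_enum F2_natr_eq1.
Qed.

Lemma col_of_addb_bits s t :
  col_of_bits (addb_bits s t) = (col_of_bits s + col_of_bits t)%R.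
Proof. by apply/matrixP => i j; rewrite !mxE nth_addb_bits natr_addb ?pchar_Fp. Qed.

End BitColumns.

(* Unlike [has], whose [||] is evaluated strictly by [vm_compute], [find]
   stops at the first witness. *)
Definition has_lazy (T : eqType) (a : pred T) (s : seq T) : bool :=
  find a s < size s.

Lemma has_lazyP (T : eqType) {a : pred T} {s : seq T} :
  reflect (exists2 x, x \in s & a x) (has_lazy a s).
Proof. by rewrite /has_lazy -has_find; apply: hasP. Qed.

Definition has_ordered_triple (P : nat -> nat -> nat -> bool) (n : nat) : bool :=
  has_lazy (fun i => has_lazy (fun j => has_lazy (P i j)
    (iota j.+1 (n - j.+1))) (iota i.+1 (n - i.+1))) (iota 0 n).

Lemma has_ordered_tripleP (P : nat -> nat -> nat -> bool) (n : nat) :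
  reflect (exists i j k, [/\ i < j, j < k, k < n & P i j k])
          (has_ordered_triple P n).
Proof.
have mem_iota_gt m x : m < n -> (x \in iota m.+1 (n - m.+1)) = (m < x < n).
  by move=> lt_mn; rewrite mem_iota subnKC.
apply: (iffP has_lazyP) => [[i] | [i [j [k [lt_ij lt_jk lt_kn Pijk]]]]].
  rewrite mem_iota add0n => lt_in /has_lazyP[j].
  rewrite mem_iota_gt // => /andP[lt_ij lt_jn] /has_lazyP[k].
  by rewrite mem_iota_gt // => /andP[lt_jk lt_kn] Pijk; exists i, j, k.
have lt_jn := ltn_trans lt_jk lt_kn; have lt_in := ltn_trans lt_ij lt_jn.
exists i; first by rewrite mem_iota.
apply/has_lazyP; exists j; first by rewrite mem_iota_gt ?lt_ij.
by apply/has_lazyP; exists k; first by rewrite mem_iota_gt ?lt_jk.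
Qed.

Lemma odd_exp2_div a b : odd (2 ^ a %/ 2 ^ b) = (a == b).
Proof.
have [le_ba | lt_ab] := leqP b a.
  by rewrite -expnB // oddX orbF subn_eq0 eqn_leq le_ba andbT.
by rewrite divn_small ?ltn_exp2l // ltn_eqF.
Qed.

Lemma hex_bit_exp2 (i : 'I_10) j : j < 10 -> hex_bit (2 ^ (9 - j)) i = (i == j :> nat).
Proof.
move=> lt_j10; have lt_i10 := ltn_ord i.
by rewrite /hex_bit odd_exp2_div; apply/eqP/eqP; lia.
Qed.

Definition H_KR_code (j : nat) : nat :=
  if j < 10 then 2 ^ (9 - j) else nth 0 MKR_hex (j - 10).

Definition hex_bits (h : nat) : seq bool :=
  [seq odd (h %/ 2 ^ (9 - t)) | t <- iota 0 10].

Definition H_KR_bits : seq (seq bool) := [seq hex_bits (H_KR_code j) | j <- iota 0 51].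

Lemma col_H_KR (j : 'I_51) : col j H_KR = col_of_bits 10 (nth [::] H_KR_bits j).
Proof.
apply/matrixP => i k; rewrite !mxE (nth_map 0) ?size_iota // nth_iota //.
rewrite (nth_map 0) ?size_iota // nth_iota // /H_KR_code.
by case: ifP => // lt_j10; rewrite -hex_bit_exp2.
Qed.

Definition sum_of_three_H_KR_columns (s : seq bool) : bool :=
  has_ordered_triple (fun i j k =>
    addb_bits (addb_bits (nth [::] H_KR_bits i) (nth [::] H_KR_bits j))
              (nth [::] H_KR_bits k) == s) 51.

Lemma all_sum_of_three_H_KR_columns : all sum_of_three_H_KR_columns (bitseqs 10).
Proof. by vm_compute. Qed.

Local Open Scope ring_scope.

Theorem lemma7p4 :
  forall v : 'cV['F_2]_10,
    exists i j k : 'I_51,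
      [/\ i != j, i != k, j != k &
          col i H_KR + col j H_KR + col k H_KR = v].
Proof.
move=> v.
have /has_ordered_tripleP[i [j [k [lt_ij lt_jk lt_k51 /eqP sum_ijk]]]] :
    sum_of_three_H_KR_columns (bits_of_col v).
  apply: (allP all_sum_of_three_H_KR_columns).
  by have := mem_bitseqs (bits_of_col v); rewrite size_bits_of_col.
have lt_j51 := ltn_trans lt_jk lt_k51; have lt_i51 := ltn_trans lt_ij lt_j51.
exists (Ordinal lt_i51), (Ordinal lt_j51), (Ordinal lt_k51).
split; rewrite ?neq_ltn ?lt_ij ?lt_jk ?(ltn_trans lt_ij lt_jk) //.
by rewrite !col_H_KR -!col_of_addb_bits sum_ijk bits_of_colK.
Qed.
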